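(* Let $d\in\mathbb{N}$, $C>0$, $N\ge Cd$ and $t>0$. Then for every $x\in\mathbb{R}^d$ with $|x|\ge N(1+t/N)^{1/2}$, $$|Q\cap(B^2_N-x)|=|\{y\in Q: x+y\in B^2_N\}|\le 2e^{-ct^2},\qquad\text{where } c=\frac{7}{32}\frac{C^2}{(C+1)^2}.$$
   Context: $Q=[-1/2,1/2]^d$ is the unit cube, $B^2_N=\{x\in\mathbb{R}^d:|x|\le N\}$ is the closed Euclidean ball of radius $N$, $|\cdot|$ on sets denotes Lebesgue measure and on vectors the Euclidean norm. *)

From Stdlib Require Import Reals Lra.
Open Scope R_scope.

(* Points of R^d are represented as functions nat -> R; only the
   coordinates i < d are relevant. *)
Definition vec := nat -> R.

Fixpoint sum_lt (d : nat) (f : nat -> R) : R :=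
  match d with O => 0 | S k => sum_lt k f + f k end.
Fixpoint prod_lt (d : nat) (f : nat -> R) : R :=
  match d with O => 1 | S k => prod_lt k f * f k end.

Definition enorm (d : nat) (x : vec) : R := sqrt (sum_lt d (fun i => x i ^ 2)).

Definition vadd (x y : vec) : vec := fun i => x i + y i.

Definition cube (d : nat) (y : vec) : Prop :=
  forall i, (i < d)%nat -> -1/2 <= y i <= 1/2.

Definition ball (d : nat) (N : R) (z : vec) : Prop := enorm d z <= N.

Definition in_box (d : nat) (a b : vec) (y : vec) : Prop :=
  forall i, (i < d)%nat -> a i <= y i <= b i.
Definition box_vol (d : nat) (a b : vec) : R := prod_lt d (fun i => b i - a i).

(* Lebesgue (outer) measure of A ⊆ R^d is at most s:
   Lebesgue outer measure = inf over countable covers by boxes of the total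
   volume; "inf <= s" unfolds to: for every eps > 0 there is a countable cover
   by (nondegenerate-ordered) boxes whose volumes sum to at most s + eps. *)
Definition lebesgue_measure_le (d : nat) (A : vec -> Prop) (s : R) : Prop :=
  forall eps, 0 < eps ->
    exists (a b : nat -> vec),
      (forall k i, (i < d)%nat -> a k i <= b k i) /\
      (forall y, A y -> exists k, in_box d (a k) (b k) y) /\
      (forall n, sum_f_R0 (fun k => box_vol d (a k) (b k)) n <= s + eps).

(* Expanding |x+y|^2 = |x|^2 + 2<x,y> + |y|^2 shows that y ∈ Q with
   |x+y| <= N satisfies the half-space constraint <x,y> <= -A, where
   A = (|x|^2 - N^2)/2 >= tN/2.  Such a slice of the cube is small by
   Hoeffding's inequality: by the Chernoff trick its measure is at most
   exp(-lam A) times the moment generating function of <x,y>, which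
   factorizes over coordinates, each factor being at most exp(lam^2 x_i^2/8)
   because cosh z <= exp(z^2/2).  Since the measure is an outer measure
   defined by box covers, the bound is run on the grid of m^d cells, which
   costs a factor e^(1/2) <= 2; lam = 4A/|x|^2 gives 2 exp(-2A^2/|x|^2).
   If |x| <= N + N/C this dominates 2 exp(-c t^2).  If |x| > N + N/C the
   set is empty, since |<x,y>| <= |x|_1/2 <= (N/C)|x|/2 on the cube. *)

From Coquelicot Require Import Coquelicot.
From Stdlib Require Import Reals Lra Lia List.
Open Scope R_scope.

Lemma sum_lt_ext n f g :
  (forall i, (i < n)%nat -> f i = g i) -> sum_lt n f = sum_lt n g.
Proof.
  induction n as [|n IH]; intros H; simpl; [reflexivity|].
  rewrite IH by (intros; apply H; lia). now rewrite H by lia.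
Qed.

Lemma sum_lt_le n f g :
  (forall i, (i < n)%nat -> f i <= g i) -> sum_lt n f <= sum_lt n g.
Proof.
  induction n as [|n IH]; intros H; simpl; [lra|].
  apply Rplus_le_compat; [apply IH; intros; apply H|apply H]; lia.
Qed.

Lemma sum_lt_plus n f g : sum_lt n (fun i => f i + g i) = sum_lt n f + sum_lt n g.
Proof. induction n as [|n IH]; simpl; [lra|]. rewrite IH. ring. Qed.

Lemma sum_lt_scal n c f : sum_lt n (fun i => c * f i) = c * sum_lt n f.
Proof. induction n as [|n IH]; simpl; [ring|]. rewrite IH. ring. Qed.

Lemma sum_lt_const n c : sum_lt n (fun _ => c) = INR n * c.
Proof. induction n as [|n IH]; simpl sum_lt; [simpl; ring|]. rewrite IH, S_INR. ring. Qed.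

Lemma sum_lt_nonneg n f : (forall i, (i < n)%nat -> 0 <= f i) -> 0 <= sum_lt n f.
Proof.
  intros H. rewrite <- (Rmult_0_r (INR n)), <- sum_lt_const. now apply sum_lt_le.
Qed.

Lemma sum_lt_shift n f : sum_lt (S n) f = f 0%nat + sum_lt n (fun i => f (S i)).
Proof. induction n as [|n IH]; simpl in *; [ring|]. rewrite IH. ring. Qed.

Lemma sum_lt_rev n f : sum_lt n f = sum_lt n (fun i => f (n - 1 - i)%nat).
Proof.
  revert f; induction n as [|n IH]; intros f; [reflexivity|].
  rewrite (sum_lt_shift n (fun i => f (S n - 1 - i)%nat)). simpl sum_lt at 1. rewrite (IH f).
  replace (S n - 1 - 0)%nat with n by lia. rewrite Rplus_comm. f_equal.
  apply sum_lt_ext. intros i _. f_equal. lia.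
Qed.

Lemma prod_lt_ext n f g :
  (forall i, (i < n)%nat -> f i = g i) -> prod_lt n f = prod_lt n g.
Proof.
  induction n as [|n IH]; intros H; simpl; [reflexivity|].
  rewrite IH by (intros; apply H; lia). now rewrite H by lia.
Qed.

Lemma prod_lt_nonneg n f : (forall i, (i < n)%nat -> 0 <= f i) -> 0 <= prod_lt n f.
Proof.
  induction n as [|n IH]; intros H; simpl; [lra|].
  apply Rmult_le_pos; [apply IH; intros; apply H|apply H]; lia.
Qed.

Lemma prod_lt_le n f g :
  (forall i, (i < n)%nat -> 0 <= f i <= g i) -> prod_lt n f <= prod_lt n g.
Proof.
  induction n as [|n IH]; intros H; simpl; [lra|].
  apply Rmult_le_compat;
    [apply prod_lt_nonneg; intros; apply H|apply H|apply IH; intros; apply H|apply H]; lia.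
Qed.

Lemma prod_lt_exp n f : prod_lt n (fun i => exp (f i)) = exp (sum_lt n f).
Proof. induction n as [|n IH]; simpl; [now rewrite exp_0|]. now rewrite IH, exp_plus. Qed.

Lemma exp_le_mono x y : x <= y -> exp x <= exp y.
Proof. intros [Hlt|Heq]; [now apply Rlt_le, exp_increasing|now rewrite Heq; right]. Qed.

(* exp(1/2) ≤ 2, since exp(1/2)^2 = e ≤ 3: the price of discretisation. *)
Lemma exp_half_le_2 : exp (1/2) <= 2.
Proof.
  assert (E : exp (1/2) * exp (1/2) = exp 1) by (rewrite <- exp_plus; f_equal; lra).
  pose proof exp_le_3. pose proof (exp_pos (1/2)). nra.
Qed.

Lemma mono_of_deriv_nonneg (f f' : R -> R) z : 0 <= z ->
  (forall c, 0 <= c <= z -> is_derive f c (f' c)) ->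
  (forall c, 0 <= c <= z -> 0 <= f' c) -> f 0 <= f z.
Proof.
  intros Hz Hder Hpos. destruct (Req_dec z 0) as [->|Hz0]; [lra|].
  destruct (MVT_cor2 f f' 0 z) as [c [Hfc Hc]]; [lra| |].
  { intros c Hc. now apply is_derive_Reals, Hder. }
  assert (0 <= f' c * (z - 0)) by (apply Rmult_le_pos; [apply Hpos|]; lra).
  lra.
Qed.

Lemma sinh_le_mul_cosh z : 0 <= z -> exp z - exp (- z) <= z * (exp z + exp (- z)).
Proof.
  intros Hz.
  pose proof (mono_of_deriv_nonneg (fun w => w * (exp w + exp (- w)) - (exp w - exp (- w)))
                (fun w => w * (exp w - exp (- w))) z Hz) as Hmono.
  cbv beta in Hmono. rewrite Ropp_0, Rmult_0_l in Hmono.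
  enough (0 - (exp 0 - exp 0) <= z * (exp z + exp (- z)) - (exp z - exp (- z))) by lra.
  apply Hmono.
  - intros c _. auto_derive; [auto|ring].
  - intros c Hc. apply Rmult_le_pos; [lra|].
    assert (exp (- c) <= exp c) by (apply exp_le_mono; lra). lra.
Qed.

(* cosh z ≤ exp(z^2/2), the heart of Hoeffding's lemma: for w >= 0 the
   function 2 cosh w exp(-w^2/2) decreases, its derivative being
   2 exp(-w^2/2) (sinh w - w cosh w) <= 0; the case w < 0 follows by symmetry. *)
Lemma cosh_le_exp_sq z : exp z + exp (- z) <= 2 * exp (z ^ 2 / 2).
Proof.
  assert (Hnonneg : forall w, 0 <= w -> exp w + exp (- w) <= 2 * exp (w ^ 2 / 2)).
  { intros w Hw.
    pose proof (mono_of_deriv_nonneg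
      (fun v => - ((exp v + exp (- v)) * exp (- (v ^ 2 / 2))))
      (fun v => exp (- (v ^ 2 / 2)) * (v * (exp v + exp (- v)) - (exp v - exp (- v)))) w Hw)
      as Hmono.
    cbv beta in Hmono.
    replace (0 ^ 2 / 2) with 0 in Hmono by field. rewrite Ropp_0, exp_0 in Hmono.
    assert (Hdecr : (exp w + exp (- w)) * exp (- (w ^ 2 / 2)) <= 2).
    { enough (- ((1 + 1) * 1) <= - ((exp w + exp (- w)) * exp (- (w ^ 2 / 2)))) by lra.
      apply Hmono.
      - intros c _. auto_derive; [auto|].
        replace (c * (c * 1) * / 2) with (c ^ 2 / 2) by field. field.
      - intros c Hc. apply Rmult_le_pos; [apply Rlt_le, exp_pos|].
        pose proof (sinh_le_mul_cosh c (proj1 Hc)). lra. }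
    assert (E : exp (- (w ^ 2 / 2)) * exp (w ^ 2 / 2) = 1)
      by (rewrite <- exp_plus, Rplus_opp_l; apply exp_0).
    pose proof (exp_pos (w ^ 2 / 2)). nra. }
  destruct (Rle_dec 0 z) as [Hz|Hz]; [now apply Hnonneg|].
  pose proof (Hnonneg (- z) ltac:(lra)) as Hneg.
  rewrite Ropp_involutive in Hneg. replace ((- z) ^ 2) with (z ^ 2) in Hneg by ring. lra.
Qed.

Definition step (m : nat) : R := / INR m.
Definition cell_lo (m j : nat) : R := -1/2 + INR j * step m.
Definition cell_hi (m j : nat) : R := -1/2 + (INR j + 1) * step m.
Definition cell_mid (m j : nat) : R := -1/2 + (INR j + 1/2) * step m.

Lemma step_pos m : (1 <= m)%nat -> 0 < step m.
Proof. intros Hm. apply Rinv_0_lt_compat, lt_0_INR. lia. Qed.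

Lemma step_total m : (1 <= m)%nat -> INR m * step m = 1.
Proof. intros Hm. unfold step. field. apply not_0_INR. lia. Qed.

Lemma cell_width m j : cell_hi m j - cell_lo m j = step m.
Proof. unfold cell_hi, cell_lo. ring. Qed.

Lemma cell_mid_rev m j : (j < m)%nat -> cell_mid m (m - 1 - j) = - cell_mid m j.
Proof.
  intros Hj. pose proof (step_total m ltac:(lia)) as Hm. unfold cell_mid.
  rewrite !minus_INR by lia. simpl (INR 1). nra.
Qed.

Lemma cell_mid_sq_le m j : (j < m)%nat -> cell_mid m j ^ 2 <= 1/4.
Proof.
  intros Hj. pose proof (step_total m ltac:(lia)). pose proof (step_pos m ltac:(lia)).
  assert (INR j + 1 <= INR m) by (rewrite <- S_INR; apply le_INR; lia).
  pose proof (pos_INR j).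
  assert (0 <= (INR j + 1/2) * step m <= INR m * step m)
    by (split; [apply Rmult_le_pos|apply Rmult_le_compat_r]; lra).
  unfold cell_mid. nra.
Qed.

Lemma cell_exists m y : (1 <= m)%nat -> -1/2 <= y <= 1/2 ->
  exists j, (j < m)%nat /\ cell_lo m j <= y <= cell_hi m j /\
            Rabs (y - cell_mid m j) <= step m / 2.
Proof.
  intros Hm Hy.
  assert (Hbelow : forall J, (J < m)%nat -> y <= cell_hi m J ->
            exists j, (j <= J)%nat /\ cell_lo m j <= y <= cell_hi m j).
  { induction J as [|J IH]; intros HJ Hhi.
    - exists 0%nat. split; [lia|]. unfold cell_lo. simpl. lra.
    - destruct (Rle_dec y (cell_hi m J)) as [Hle|Hgt].
      + destruct (IH ltac:(lia) Hle) as [j [Hj Hcell]]. exists j. split; [lia|exact Hcell].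
      + exists (S J). split; [lia|]. unfold cell_lo, cell_hi in *. rewrite S_INR in *. lra. }
  destruct (Hbelow (m - 1)%nat ltac:(lia)) as [j [Hj Hcell]].
  - unfold cell_hi. rewrite minus_INR by lia. simpl (INR 1).
    pose proof (step_total m Hm). nra.
  - exists j. repeat split; [lia|lra|lra|].
    apply Rabs_le. unfold cell_lo, cell_hi, cell_mid in *. lra.
Qed.

(* Discrete Hoeffding lemma: the moment generating function of the uniform
   distribution on the midpoints is at most exp(s^2/8). *)
Lemma grid_mgf_bound m s : (1 <= m)%nat ->
  step m * sum_lt m (fun j => exp (s * cell_mid m j)) <= exp (s ^ 2 / 8).
Proof.
  intros Hm.
  assert (Hsym : sum_lt m (fun j => exp (s * cell_mid m j))
                 = sum_lt m (fun j => exp (- (s * cell_mid m j)))).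
  { rewrite sum_lt_rev. apply sum_lt_ext. intros j Hj.
    rewrite cell_mid_rev by lia. f_equal. ring. }
  assert (Hpair : 2 * sum_lt m (fun j => exp (s * cell_mid m j)) <= INR m * (2 * exp (s ^ 2 / 8))).
  { rewrite <- sum_lt_const.
    replace (2 * _) with (sum_lt m (fun j => exp (s * cell_mid m j) + exp (- (s * cell_mid m j))))
      by (rewrite sum_lt_plus, <- Hsym; ring).
    apply sum_lt_le. intros j Hj. eapply Rle_trans; [apply cosh_le_exp_sq|].
    apply Rmult_le_compat_l; [lra|]. apply exp_le_mono.
    pose proof (cell_mid_sq_le m j Hj). pose proof (pow2_ge_0 s).
    replace ((s * cell_mid m j) ^ 2) with (s ^ 2 * cell_mid m j ^ 2) by ring. nra. }
  rewrite <- (Rmult_1_l (exp (s ^ 2 / 8))), <- (step_total m Hm), (Rmult_comm (INR m)), Rmult_assoc.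
  apply Rmult_le_compat_l; [apply Rlt_le, step_pos; exact Hm|lra].
Qed.

Definition origin : vec := fun _ => 0.

Definition total_vol (n : nat) (L : list (vec * vec)) : R :=
  fold_right (fun p s => box_vol n (fst p) (snd p) + s) 0 L.

Definition ordered_boxes (L : list (vec * vec)) : Prop :=
  forall p, In p L -> forall i, fst p i <= snd p i.

Lemma total_vol_nonneg n L : ordered_boxes L -> 0 <= total_vol n L.
Proof.
  induction L as [|p L IH]; intros Hord; simpl; [lra|].
  apply Rplus_le_le_0_compat.
  - apply prod_lt_nonneg. intros i _. pose proof (Hord p (or_introl eq_refl) i). lra.
  - apply IH. intros q Hq. apply Hord. now right.
Qed.

(* Enumerating the list (padded by the degenerate box at the origin, of
   volume 0 in positive dimension), partial sums never exceed the total. *)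
Lemma partial_vol_le_total d L n : (1 <= d)%nat -> ordered_boxes L ->
  sum_f_R0 (fun k => box_vol d (fst (nth k L (origin, origin))) (snd (nth k L (origin, origin)))) n
  <= total_vol d L.
Proof.
  intros Hd. revert n. induction L as [|p L IH]; intros n Hord.
  - assert (Hzero : box_vol d origin origin = 0).
    { destruct d as [|d]; [lia|]. unfold box_vol. simpl. unfold origin. ring. }
    replace (sum_f_R0 _ n) with (sum_f_R0 (fun _ => 0) n)
      by (apply sum_eq; intros [|k] _; symmetry; exact Hzero).
    rewrite sum_cte. simpl. lra.
  - assert (HordL : ordered_boxes L) by (intros q Hq; apply Hord; now right).
    destruct n as [|n]; simpl total_vol.
    + simpl. pose proof (total_vol_nonneg d L HordL). lra.
    + rewrite decomp_sum by lia. simpl. apply Rplus_le_compat_l, IH, HordL.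
Qed.

Lemma measure_le_of_finite_cover d (P : vec -> Prop) L s : (1 <= d)%nat ->
  ordered_boxes L ->
  (forall y, P y -> exists p, In p L /\ in_box d (fst p) (snd p) y) ->
  total_vol d L <= s -> lebesgue_measure_le d P s.
Proof.
  intros Hd Hord Hcov Hvol eps Heps.
  exists (fun k => fst (nth k L (origin, origin))), (fun k => snd (nth k L (origin, origin))).
  split; [|split].
  - intros k i _. destruct (nth_in_or_default k L (origin, origin)) as [Hin|Hdef].
    + now apply Hord.
    + rewrite Hdef. unfold origin. simpl. lra.
  - intros y Hy. destruct (Hcov y Hy) as [p [Hp Hbox]].
    destruct (In_nth L p (origin, origin) Hp) as [k [_ Hk]]. exists k. now rewrite Hk.
  - intros n. pose proof (partial_vol_le_total d L n Hd Hord). lra.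
Qed.

Lemma measure_le_mono d (P P' : vec -> Prop) s s' :
  lebesgue_measure_le d P s -> (forall y, P' y -> P y) -> s <= s' ->
  lebesgue_measure_le d P' s'.
Proof.
  intros HP Hsub Hs eps Heps. destruct (HP eps Heps) as [a [b [Hab [Hcov Hsum]]]].
  exists a, b. split; [exact Hab|split].
  - intros y Hy. now apply Hcov, Hsub.
  - intros n. specialize (Hsum n). lra.
Qed.

Definition dot (n : nat) (x y : vec) : R := sum_lt n (fun i => x i * y i).
Definition sqnorm (n : nat) (x : vec) : R := sum_lt n (fun i => x i ^ 2).
Definition l1norm (n : nat) (x : vec) : R := sum_lt n (fun i => Rabs (x i)).

Definition set_coord (n : nat) (v : vec) (c : R) : vec :=
  fun i => if Nat.eqb i n then c else v i.

(* The grid cells of [-1/2,1/2]^n (n first coordinates) whose midpoint z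
   satisfies  dot n x z <= a + step/2 * l1norm n x; they contain every
   cube point y with dot n x y <= a.  Built coordinate by coordinate: fixing
   cell j in the last coordinate shifts the budget a. *)
Fixpoint halfspace_cells (x : vec) (m n : nat) (a : R) : list (vec * vec) :=
  match n with
  | O => if Rle_dec 0 a then (origin, origin) :: nil else nil
  | S n' =>
      flat_map (fun j =>
        map (fun p => (set_coord n' (fst p) (cell_lo m j), set_coord n' (snd p) (cell_hi m j)))
          (halfspace_cells x m n' (a - x n' * cell_mid m j + Rabs (x n') * step m / 2)))
        (seq 0 m)
  end.

Lemma halfspace_cells_ordered x m n a : (1 <= m)%nat -> ordered_boxes (halfspace_cells x m n a).
Proof.
  intros Hm. revert a. induction n as [|n IH]; intros a p Hp i; simpl in Hp.
  - destruct (Rle_dec 0 a); simpl in Hp; [|tauto].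
    destruct Hp as [<-|[]]. unfold origin. simpl. lra.
  - apply in_flat_map in Hp as [j [_ Hj]]. apply in_map_iff in Hj as [q [<- Hq]].
    unfold set_coord. simpl. destruct (Nat.eqb i n).
    + pose proof (cell_width m j). pose proof (step_pos m Hm). lra.
    + exact (IH _ q Hq i).
Qed.

Lemma halfspace_cells_cover x m n a y : (1 <= m)%nat -> cube n y -> dot n x y <= a ->
  exists p, In p (halfspace_cells x m n a) /\ in_box n (fst p) (snd p) y.
Proof.
  intros Hm. revert a. induction n as [|n IH]; intros a Hy Ha.
  - simpl. destruct (Rle_dec 0 a) as [_|Hneg]; [|unfold dot in Ha; simpl in Ha; lra].
    exists (origin, origin). split; [now left|]. intros i Hi. lia.
  - destruct (cell_exists m (y n) Hm (Hy n ltac:(lia))) as [j [Hj [Hcell Hmid]]].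
    (* rounding y n to the midpoint of its cell costs at most |x n| step/2 *)
    assert (Hround : - (Rabs (x n) * (step m / 2)) <= x n * (y n - cell_mid m j)).
    { assert (Habs : Rabs (x n * (y n - cell_mid m j)) <= Rabs (x n) * (step m / 2)).
      { rewrite Rabs_mult. apply Rmult_le_compat_l; [apply Rabs_pos|exact Hmid]. }
      apply Rabs_le_between in Habs. lra. }
    destruct (IH (a - x n * cell_mid m j + Rabs (x n) * step m / 2)) as [p [Hp Hbox]].
    + intros i Hi. apply Hy. lia.
    + unfold dot in *. simpl in Ha. lra.
    + exists (set_coord n (fst p) (cell_lo m j), set_coord n (snd p) (cell_hi m j)). split.
      * apply in_flat_map. exists j. split; [apply in_seq; lia|].
        apply in_map_iff. exists p. now split.
      * intros i Hi. unfold set_coord. simpl.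
        destruct (Nat.eqb_spec i n) as [->|Hne]; [exact Hcell|apply Hbox; lia].
Qed.

Lemma total_vol_app n L1 L2 : total_vol n (L1 ++ L2) = total_vol n L1 + total_vol n L2.
Proof. induction L1 as [|p L1 IH]; simpl; [ring|]. unfold total_vol in *. simpl. rewrite IH. ring. Qed.

Lemma total_vol_flat_map n (f : nat -> list (vec * vec)) m :
  total_vol n (flat_map f (seq 0 m)) = sum_lt m (fun j => total_vol n (f j)).
Proof.
  induction m as [|m IH]; [reflexivity|].
  rewrite seq_S, flat_map_app, total_vol_app, IH. simpl. now rewrite app_nil_r.
Qed.

Lemma total_vol_set_coord n L c1 c2 :
  total_vol (S n) (map (fun p => (set_coord n (fst p) c1, set_coord n (snd p) c2)) L)
  = total_vol n L * (c2 - c1).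
Proof.
  induction L as [|p L IH]; simpl; [unfold total_vol; simpl; ring|].
  unfold total_vol in *. simpl. rewrite IH.
  unfold box_vol. simpl. unfold set_coord at 3 4. rewrite Nat.eqb_refl.
  rewrite (prod_lt_ext n _ (fun i => snd p i - fst p i)); [ring|].
  intros i Hi. unfold set_coord. destruct (Nat.eqb_spec i n); [lia|reflexivity].
Qed.

(* Chernoff bound for the cells: each cell of volume step^n counts with weight
   exp(lam (a + step/2 |x|_1 - dot x z)) >= 1 at its midpoint z, and the sum
   of these weights factorizes over the coordinates. *)
Lemma halfspace_cells_volume x m n a lam : (1 <= m)%nat -> 0 <= lam ->
  total_vol n (halfspace_cells x m n a)
  <= exp (lam * (a + step m / 2 * l1norm n x))
     * prod_lt n (fun i => step m * sum_lt m (fun j => exp (- lam * x i * cell_mid m j))).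
Proof.
  intros Hm Hlam. revert a. induction n as [|n IH]; intros a.
  - simpl. unfold l1norm. simpl. rewrite Rmult_0_r, Rplus_0_r, Rmult_1_r.
    destruct (Rle_dec 0 a) as [Ha|Ha].
    + unfold total_vol, box_vol. simpl. rewrite Rplus_0_r.
      rewrite <- exp_0. apply exp_le_mono, Rmult_le_pos; lra.
    + unfold total_vol. simpl. apply Rlt_le, exp_pos.
  - set (P := prod_lt n (fun i => step m * sum_lt m (fun j => exp (- lam * x i * cell_mid m j)))).
    set (E := exp (lam * (a + step m / 2 * l1norm (S n) x))).
    simpl halfspace_cells. rewrite total_vol_flat_map.
    apply Rle_trans with (sum_lt m (fun j => E * P * exp (- lam * x n * cell_mid m j) * step m)).
    + apply sum_lt_le. intros j Hj.
      rewrite total_vol_set_coord, cell_width.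
      apply Rmult_le_compat_r; [apply Rlt_le, step_pos; exact Hm|].
      eapply Rle_trans; [apply IH|]. fold P. apply Req_le.
      unfold E. rewrite (Rmult_comm _ (exp (- lam * x n * cell_mid m j))), <- Rmult_assoc, <- exp_plus.
      f_equal. f_equal. unfold l1norm. simpl. lra.
    + rewrite (sum_lt_ext m _ (fun j => (E * P * step m) * exp (- lam * x n * cell_mid m j)))
        by (intros; ring).
      rewrite sum_lt_scal. simpl prod_lt. fold P. right. ring.
Qed.

Lemma sqnorm_nonneg n x : 0 <= sqnorm n x.
Proof. apply sum_lt_nonneg. intros. apply pow2_ge_0. Qed.

Lemma dim_pos_of_sqnorm_pos d x : 0 < sqnorm d x -> (1 <= d)%nat.
Proof. destruct d as [|d]; [unfold sqnorm; simpl; lra|lia]. Qed.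

Lemma cube_halfspace_chernoff d x m a lam : (1 <= d)%nat -> (1 <= m)%nat -> 0 <= lam ->
  lebesgue_measure_le d (fun y => cube d y /\ dot d x y <= a)
    (exp (lam * (a + step m / 2 * l1norm d x) + lam ^ 2 / 8 * sqnorm d x)).
Proof.
  intros Hd Hm Hlam.
  apply (measure_le_of_finite_cover d _ (halfspace_cells x m d a) _ Hd).
  - now apply halfspace_cells_ordered.
  - intros y [Hy Ha]. now apply halfspace_cells_cover.
  - eapply Rle_trans; [exact (halfspace_cells_volume x m d a lam Hm Hlam)|].
    rewrite exp_plus. apply Rmult_le_compat_l; [apply Rlt_le, exp_pos|].
    unfold sqnorm. rewrite <- (sum_lt_scal d (lam ^ 2 / 8)), <- prod_lt_exp.
    apply prod_lt_le. intros i _. split.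
    + apply Rmult_le_pos; [apply Rlt_le, step_pos; exact Hm|].
      apply sum_lt_nonneg. intros. apply Rlt_le, exp_pos.
    + replace (lam ^ 2 / 8 * x i ^ 2) with ((- lam * x i) ^ 2 / 8) by lra.
      now apply grid_mgf_bound.
Qed.

(* Take lam = 4A/|x|^2 and a grid so fine that the discretisation error
   lam |x|_1 /(2m) is below 1/2. *)
Lemma cube_halfspace_tail d x A : 0 < A -> 0 < sqnorm d x ->
  lebesgue_measure_le d (fun y => cube d y /\ dot d x y <= - A)
    (2 * exp (- (2 * A ^ 2 / sqnorm d x))).
Proof.
  intros HA HS. set (q := sqnorm d x) in *. set (L := l1norm d x).
  set (lam := 4 * A / q).
  assert (Hlam : 0 <= lam) by (apply Rlt_le, Rdiv_lt_0_compat; lra).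
  destruct (INR_unbounded (lam * L)) as [k Hk].
  set (m := S k).
  assert (Hm : (1 <= m)%nat) by (unfold m; lia).
  assert (Hfine : lam * (step m / 2 * L) <= 1/2).
  { assert (lam * L <= INR m) by (unfold m; rewrite S_INR; lra).
    pose proof (step_total m Hm). pose proof (step_pos m Hm).
    replace (lam * (step m / 2 * L)) with (lam * L * step m / 2) by lra.
    assert (lam * L * step m <= INR m * step m) by (apply Rmult_le_compat_r; lra). lra. }
  eapply measure_le_mono.
  - apply (cube_halfspace_chernoff d x m (- A) lam); [apply (dim_pos_of_sqnorm_pos d x HS)|exact Hm|exact Hlam].
  - easy.
  - eapply Rle_trans.
    + apply exp_le_mono with (y := 1/2 + - (2 * A ^ 2 / q)). fold L q.
      assert (lam * - A + lam ^ 2 / 8 * q = - (2 * A ^ 2 / q)) by (unfold lam; field; lra).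
      lra.
    + rewrite exp_plus. apply Rmult_le_compat_r; [apply Rlt_le, exp_pos|apply exp_half_le_2].
Qed.

Lemma enorm_sq d x : enorm d x ^ 2 = sqnorm d x.
Proof. apply pow2_sqrt, sqnorm_nonneg. Qed.

Lemma ball_sqnorm_le d N z : ball d N z -> sqnorm d z <= N ^ 2.
Proof.
  intros Hz. rewrite <- enorm_sq. apply pow_incr. split; [apply sqrt_pos|exact Hz].
Qed.

Lemma sqnorm_vadd n x y : sqnorm n (vadd x y) = sqnorm n x + 2 * dot n x y + sqnorm n y.
Proof.
  unfold sqnorm, dot, vadd. induction n as [|n IH]; cbn [sum_lt]; [lra|]. rewrite IH. lra.
Qed.

Lemma dot_cube_lower n x y : cube n y -> - (l1norm n x / 2) <= dot n x y.
Proof.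
  intros Hy. unfold l1norm, dot. rewrite <- (Rmult_1_r (sum_lt n _)) at 1.
  replace (- (sum_lt n (fun i => Rabs (x i)) * 1 / 2))
    with (sum_lt n (fun i => - (1/2) * Rabs (x i))) by (rewrite sum_lt_scal; lra).
  apply sum_lt_le. intros i Hi.
  assert (Habs : Rabs (x i * y i) <= Rabs (x i) * (1/2)).
  { rewrite Rabs_mult. apply Rmult_le_compat_l; [apply Rabs_pos|].
    apply Rabs_le. specialize (Hy i Hi). lra. }
  apply Rabs_le_between in Habs. lra.
Qed.

(* Cauchy-Schwarz: |x|_1^2 <= n |x|^2, from 0 <= sum_i (|x_i| - |x|_1/n)^2. *)
Lemma l1norm_sq_le n x : l1norm n x ^ 2 <= INR n * sqnorm n x.
Proof.
  destruct n as [|n]; [unfold l1norm, sqnorm; simpl; lra|].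
  set (k := l1norm (S n) x / INR (S n)).
  assert (Hn : 0 < INR (S n)) by (apply lt_0_INR; lia).
  assert (Hvar : 0 <= sum_lt (S n) (fun i => (Rabs (x i) - k) ^ 2))
    by (apply sum_lt_nonneg; intros; apply pow2_ge_0).
  rewrite (sum_lt_ext _ _ (fun i => x i ^ 2 + (-2 * k) * Rabs (x i) + k ^ 2)) in Hvar.
  2:{ intros i _. rewrite <- (pow2_abs (x i)) at 1. lra. }
  rewrite !sum_lt_plus, sum_lt_scal, sum_lt_const in Hvar. fold (sqnorm (S n) x) (l1norm (S n) x) in Hvar.
  unfold k in Hvar. apply Rmult_le_compat_l with (r := INR (S n)) in Hvar; [|lra].
  replace (INR (S n) * (sqnorm (S n) x + -2 * (l1norm (S n) x / INR (S n)) * l1norm (S n) x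
            + INR (S n) * (l1norm (S n) x / INR (S n)) ^ 2))
    with (INR (S n) * sqnorm (S n) x - l1norm (S n) x ^ 2) in Hvar by (field; lra).
  lra.
Qed.

Lemma l1norm_le_dim_enorm d x B : INR d <= B -> l1norm d x <= B * enorm d x.
Proof.
  intros HdB.
  destruct d as [|d]; [unfold l1norm; simpl sum_lt; simpl INR in HdB; apply Rmult_le_pos; [lra|apply sqrt_pos]|].
  assert (Hd1 : 1 <= INR (S d)) by (rewrite S_INR; pose proof (pos_INR d); lra).
  pose proof (l1norm_sq_le (S d) x) as Hcs.
  rewrite <- enorm_sq in Hcs.
  assert (l1norm (S d) x ^ 2 <= (B * enorm (S d) x) ^ 2).
  { apply Rle_trans with (INR (S d) * enorm (S d) x ^ 2); [exact Hcs|].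
    rewrite Rpow_mult_distr. apply Rmult_le_compat_r; [apply pow2_ge_0|nra]. }
  apply Rsqr_incr_0_var; [rewrite !Rsqr_pow2; assumption|apply Rmult_le_pos; [lra|apply sqrt_pos]].
Qed.

Lemma ball_shift_halfspace d N x y : ball d N (vadd x y) ->
  dot d x y <= - ((sqnorm d x - N ^ 2) / 2).
Proof.
  intros Hb. pose proof (ball_sqnorm_le d N _ Hb) as Hsq.
  rewrite sqnorm_vadd in Hsq. pose proof (sqnorm_nonneg d y). lra.
Qed.

(* If |x|_1 <= B |x| and |x| > N + B, no point of x + Q lies in the ball:
   |x+y|^2 >= |x|^2 - |x|_1 >= |x| (|x| - B) > N^2. *)
Lemma far_shift_misses_ball d N B x y : 0 <= N -> 0 <= B ->
  l1norm d x <= B * enorm d x -> (N + B) ^ 2 < sqnorm d x ->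
  cube d y -> ~ ball d N (vadd x y).
Proof.
  intros HN HB HL Hfar Hy Hb.
  pose proof (ball_sqnorm_le d N _ Hb) as Hsq. rewrite sqnorm_vadd in Hsq.
  pose proof (sqnorm_nonneg d y). pose proof (dot_cube_lower d x y Hy).
  rewrite <- enorm_sq in Hfar, Hsq. set (r := enorm d x) in *.
  assert (Hr : N + B < r) by (pose proof (sqrt_pos (sqnorm d x)); nra).
  nra.
Qed.

Lemma sq_of_scaled_sqrt N t r : 0 < N -> 0 < t -> N * sqrt (1 + t / N) <= r ->
  N ^ 2 + t * N <= r ^ 2.
Proof.
  intros HN Ht Hr.
  assert (Hq : 0 <= 1 + t / N) by (pose proof (Rdiv_lt_0_compat t N Ht HN); lra).
  assert (H0 : 0 <= N * sqrt (1 + t / N)) by (apply Rmult_le_pos; [lra|apply sqrt_pos]).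
  pose proof (pow_incr _ _ 2 (conj H0 Hr)) as Hsq.
  rewrite Rpow_mult_distr, pow2_sqrt in Hsq by exact Hq.
  replace (N ^ 2 * (1 + t / N)) with (N ^ 2 + t * N) in Hsq by (field; lra). exact Hsq.
Qed.

(* Comparison of exponents: with A = (S - N^2)/2 >= tN/2 and S <= (N + N/C)^2,
   2A^2/S >= t^2 C^2 / (2 (C+1)^2) >= c t^2. *)
Lemma tail_exponent_ge C N t S : 0 < C -> 0 < N -> 0 < t ->
  N ^ 2 + t * N <= S -> S <= (N + N / C) ^ 2 ->
  (7 / 32) * (C ^ 2 / (C + 1) ^ 2) * t ^ 2 <= 2 * ((S - N ^ 2) / 2) ^ 2 / S.
Proof.
  intros HC HN Ht Hlow Hup. set (c := (7 / 32) * (C ^ 2 / (C + 1) ^ 2)).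
  assert (HS : 0 < S) by nra.
  assert (Hc : 0 <= c) by (unfold c; apply Rmult_le_pos; [lra|];
    apply Rdiv_le_0_compat; [apply pow2_ge_0|apply pow_lt; lra]).
  assert (HcN : c * (N + N / C) ^ 2 = 7 / 32 * N ^ 2) by (unfold c; field; lra).
  assert (HtN : (t * N) ^ 2 <= (S - N ^ 2) ^ 2)
    by (apply pow_incr; split; [apply Rmult_le_pos|]; lra).
  apply Rmult_le_reg_r with S; [exact HS|].
  replace (2 * ((S - N ^ 2) / 2) ^ 2 / S * S) with ((S - N ^ 2) ^ 2 / 2) by (field; lra).
  apply Rle_trans with (c * t ^ 2 * (N + N / C) ^ 2).
  - apply Rmult_le_compat_l; [apply Rmult_le_pos; [exact Hc|apply pow2_ge_0]|exact Hup].
  - replace (c * t ^ 2 * (N + N / C) ^ 2) with (7 / 32 * (t * N) ^ 2)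
      by (rewrite Rmult_assoc, (Rmult_comm (t ^ 2)), <- Rmult_assoc, HcN; ring).
    pose proof (pow2_ge_0 (t * N)). lra.
Qed.

Lemma measure_le_empty d (P : vec -> Prop) s : (1 <= d)%nat -> (forall y, ~ P y) -> 0 <= s ->
  lebesgue_measure_le d P s.
Proof.
  intros Hd Hempty Hs. apply (measure_le_of_finite_cover d P nil s Hd).
  - intros p [].
  - intros y Hy. now exfalso; apply (Hempty y).
  - exact Hs.
Qed.

Theorem lemma5p2 (d : nat) (C N t : R)
  (hC : 0 < C) (hN0 : 0 < N) (hN : C * INR d <= N) (ht : 0 < t) :
  forall x : vec,
    N * sqrt (1 + t / N) <= enorm d x ->
    lebesgue_measure_le d (fun y => cube d y /\ ball d N (vadd x y))
      (2 * exp (- ((7 / 32) * (C ^ 2 / (C + 1) ^ 2)) * t ^ 2)).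
Proof.
  intros x Hx.
  pose proof (sq_of_scaled_sqrt N t _ hN0 ht Hx) as Hlow. rewrite enorm_sq in Hlow.
  assert (HS : 0 < sqnorm d x) by nra.
  set (B := N / C).
  assert (HdB : INR d <= B) by (unfold B; apply Rle_div_r; lra).
  assert (HB : 0 <= B) by (pose proof (pos_INR d); lra).
  destruct (Rle_dec (sqnorm d x) ((N + B) ^ 2)) as [Hnear|Hfar].
  - (* x + Q meets the ball only in a half-space slice of Hoeffding-small measure *)
    apply (measure_le_mono d _ _ _ _ (cube_halfspace_tail d x ((sqnorm d x - N ^ 2) / 2) ltac:(nra) HS)).
    + intros y [Hy Hb]. split; [exact Hy|]. exact (ball_shift_halfspace d N x y Hb).
    + apply Rmult_le_compat_l; [lra|]. apply exp_le_mono.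
      pose proof (tail_exponent_ge C N t (sqnorm d x) hC hN0 ht Hlow Hnear). lra.
  - (* x is so far that x + Q misses the ball *)
    apply measure_le_empty.
    + exact (dim_pos_of_sqnorm_pos d x HS).
    + intros y [Hy Hb]. revert Hb.
      apply (far_shift_misses_ball d N B x y); try lra; [now apply l1norm_le_dim_enorm|exact Hy].
    + pose proof (exp_pos (- ((7 / 32) * (C ^ 2 / (C + 1) ^ 2)) * t ^ 2)). lra.
Qed.
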